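(* Let $G_6$ be the graph on vertex set $[6]$ with edges $(1,2),(1,3),(1,4),(1,6),(2,3),(2,4),(2,5),(3,4),(3,5),(4,5),(5,6)$ (a subdivision of $K_5$). Then the abelian group $H_1(G_6;\mathbb Z)$ contains an element of order $2$.
   Context: Let $G$ be a simple graph with vertex set $[n]$; an edge $\{i,j\}$ with $i<j$ is written $(i,j)$, and $E(G)$ is totally ordered lexicographically. For $F\subseteq E(G)$ let $\beta(F)$ be the partition of $[n]$ into the vertex sets of the connected components of $([n],F)$, and $\mathfrak S_{\beta(F)}\subseteq\mathfrak S_n$ the subgroup of permutations mapping each block to itself. For a commutative ring $R$ let $a_F=\sum_{\sigma\in\mathfrak S_{\beta(F)}}\sigma\in R[\mathfrak S_n]$ and $\mathcal M_F=R[\mathfrak S_n]a_F$; for $e\in F$, $\mathcal M_F\subseteq\mathcal M_{F\setminus e}$. The chain complex is $C_i(G;R)=\bigoplus_{|F|=i}\mathcal M_F$ with $d_i(x)=\sum_{e\in F}(-1)^{|\{f\in F: f<e\}|}\iota_{F,F\setminus e}(x)$ for $x\in\mathcal M_F$, $\iota$ the inclusion into the summand $\mathcal M_{F\setminus e}$; $H_i(G;R)=\ker d_i/\operatorname{im}d_{i+1}$ (the $q$-degree zero chromatic symmetric homology). *)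

From HB Require Import structures.
From mathcomp Require Import all_boot all_order all_algebra all_fingroup.
Set Implicit Arguments. Unset Strict Implicit. Unset Printing Implicit Defensive.
Import GRing.Theory.
Local Open Scope ring_scope.

(* Vertices [n] = {1,...,n} are represented by 'I_n (vertex k <-> ordinal k-1).
   A graph is given by its edge list E : seq (nat * nat) of pairs (i,j), i<j,
   written with the paper's 1-based labels and listed in lexicographic order;
   edge number e : 'I_(size E) is nth (0,0) E e, and the total order on E(G)
   is the order of the indices. *)

(* The group ring Z[S_n]: integer-valued functions on permutations. *)
Definition ZS (n : nat) := {ffun {perm 'I_n} -> int}.

Definition gmul (n : nat) (x y : ZS n) : ZS n :=
  [ffun s => \sum_(t : {perm 'I_n}) x t * y (t^-1 * s)%g].

Definition edge_at (E : seq (nat * nat)) (e : 'I_(size E)) := nth (0%N, 0%N) E e.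

Definition adjF (n : nat) (E : seq (nat * nat)) (F : {set 'I_(size E)}) : rel 'I_n :=
  fun u v => [exists e in F, (edge_at e == (u.+1, v.+1)) || (edge_at e == (v.+1, u.+1))].

(* S_{beta(F)}: permutations mapping each connected component of ([n],F) to itself *)
Definition Sbeta (n : nat) (E : seq (nat * nat)) (F : {set 'I_(size E)}) : {set {perm 'I_n}} :=
  [set s : {perm 'I_n} | [forall v, connect (@adjF n E F) v (s v)]].

Definition aF (n : nat) (E : seq (nat * nat)) (F : {set 'I_(size E)}) : ZS n :=
  [ffun s => if s \in @Sbeta n E F then 1 else 0].

Definition inM (n : nat) (E : seq (nat * nat)) (F : {set 'I_(size E)}) (x : ZS n) : Prop :=
  exists y : ZS n, x = @gmul n y (@aF n E F).

Definition chain (n : nat) (E : seq (nat * nat)) := {ffun {set 'I_(size E)} -> ZS n}.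

Definition inC (n : nat) (E : seq (nat * nat)) (i : nat) (c : chain n E) : Prop :=
  (forall F : {set 'I_(size E)}, #|F| != i -> c F = 0) /\ (forall F : {set 'I_(size E)}, @inM n E F (c F)).

(* The differential: the component at G of d(c) is
   sum over e not in G of (-1)^{#{f in G | f < e}} c(G u {e}),
   i.e. d(x) = sum_{e in F} (-1)^{#{f in F : f < e}} iota_{F,F\e}(x). *)
Definition dchain (n : nat) (E : seq (nat * nat)) (c : chain n E) : chain n E :=
  [ffun G : {set 'I_(size E)} => \sum_(e : 'I_(size E) | e \notin G)
               c (e |: G) *~ ((-1) ^+ #|[set f in G | (f < e)%N]|)].

Definition is_cycle (n : nat) (E : seq (nat * nat)) (i : nat) (c : chain n E) : Prop :=
  @inC n E i c /\ @dchain n E c = 0.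

Definition is_boundary (n : nat) (E : seq (nat * nat)) (i : nat) (c : chain n E) : Prop :=
  exists b : chain n E, @inC n E i.+1 b /\ c = @dchain n E b.

Definition H_has_order2 (n : nat) (E : seq (nat * nat)) (i : nat) : Prop :=
  exists c : chain n E, @is_cycle n E i c /\ ~ @is_boundary n E i c /\ @is_boundary n E i (c *+ 2).

Definition G6_edges : seq (nat * nat) :=
  [:: (1,2); (1,3); (1,4); (1,6); (2,3); (2,4); (2,5); (3,4); (3,5); (4,5); (5,6)]%N.

(* The torsion class is detected mod 2.  The cycle c is supported on single edges,
   c_{e} = y_e a_{e}, and 2c = d b for a chain b supported on pairs of edges; both are
   explicit (computer-found) and are checked by evaluating each component on all 720
   permutations, which only requires connectivity in graphs with at most two edges.
   To see that c itself is not a boundary, pair a 1-chain x with weights w_e(s) in Z/2 via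
   sum_e sum_s x_{e}(s) w_e(s).  The component of a 2-chain at {e,f} lies in Z[S_6] a_{e,f},
   so this pairing kills d(C_2) as soon as, for all e < f, the sums of w_f - w_e over the
   left cosets of S_beta({e,f}) vanish.  The weights below have this property and pair to
   1 with c. *)

From HB Require Import structures.
From mathcomp Require Import all_boot all_order all_algebra all_fingroup.
Set Implicit Arguments. Unset Strict Implicit. Unset Printing Implicit Defensive.
Import GRing.Theory.
Local Open Scope ring_scope.

Lemma mem_size_le2 (T : eqType) (s : seq T) p q r : (size s <= 2)%N ->
  p \in s -> q \in s -> r \in s -> [|| p == q, q == r | p == r].
Proof.
case: s => [|a [|b []]] // _; rewrite ?inE.
  by move=> /eqP -> /eqP -> /eqP ->; rewrite eqxx.
by move=> /pred2P [] -> /pred2P [] -> /pred2P [] ->; rewrite !eqxx ?orbT.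
Qed.

Lemma sum_offdiag (V : nmodType) m (Q : 'I_m -> 'I_m -> V) :
  \sum_(f < m) \sum_(e < m | e != f) Q e f = \sum_(f < m) \sum_(e < m | (e < f)%N) (Q e f + Q f e).
Proof.
under [RHS]eq_bigr => f _ do rewrite big_split.
rewrite big_split /= [X in _ = _ + X](exchange_big_dep xpredT) //= -big_split.
apply: eq_bigr => f _; rewrite (bigID (fun e : 'I_m => (e < f)%N)) /=.
by congr (_ + _); apply: eq_bigl => e; rewrite -val_eqE /=; case: ltngtP.
Qed.

Lemma sum_count_Z2 (T : Type) (S : seq T) (P : pred T) :
  \sum_(x <- S) ((P x)%:R : 'Z_2) = (odd (count P S))%:R.
Proof.
elim: S => [|x S IH]; rewrite ?big_nil ?big_cons //= IH oddD oddb.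
by case: (P x); case: (odd (count P S)); apply/val_inj.
Qed.

Section PermLists.

Variable n : nat.

Definition perm_list (s : {perm 'I_n}) : seq nat := [seq val (s i) | i <- enum 'I_n].

Definition list_mul (a b : seq nat) : seq nat := [seq nth 0%N b (nth 0%N a i) | i <- iota 0 n].

Definition perm_lists : seq (seq nat) := permutations (iota 0 n).

Definition perm_of_list (p : seq nat) : {perm 'I_n} :=
  insubd (1%g : {perm 'I_n}) [ffun i : 'I_n => insubd i (nth 0%N p i) : 'I_n].

Lemma nth_perm_list s (i : 'I_n) : nth 0%N (perm_list s) i = s i.
Proof. by rewrite (nth_map i) ?size_enum_ord ?nth_ord_enum. Qed.

Lemma size_perm_list s : size (perm_list s) = n.
Proof. by rewrite size_map size_enum_ord. Qed.

Lemma perm_list_mul s t : perm_list (s * t)%g = list_mul (perm_list s) (perm_list t).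
Proof.
apply: (@eq_from_nth _ 0%N); first by rewrite size_perm_list size_map size_iota.
move=> i; rewrite size_perm_list => lt_in.
rewrite (nth_perm_list _ (Ordinal lt_in)) (nth_map 0%N) ?size_iota // nth_iota //.
by rewrite (nth_perm_list s (Ordinal lt_in)) nth_perm_list permM.
Qed.

Lemma perm_list_inj : injective perm_list.
Proof. by move=> s t est; apply/permP => i; apply/val_inj; rewrite /= -!nth_perm_list est. Qed.

Lemma perm_list_in s : perm_list s \in perm_lists.
Proof.
rewrite mem_permutations -val_enum_ord /perm_list (map_comp val s).
apply: perm_map; apply: uniq_perm; rewrite ?(map_inj_uniq (@perm_inj _ s)) ?enum_uniq //.
by move=> i; rewrite mem_enum; apply/mapP; exists (s^-1 i)%g; rewrite ?mem_enum ?permKV.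
Qed.

Lemma perm_of_listK p : p \in perm_lists -> perm_list (perm_of_list p) = p.
Proof.
rewrite mem_permutations => perm_p.
have size_p : size p = n by rewrite (perm_size perm_p) size_iota.
have lt_p k : (k < n)%N -> (nth 0%N p k < n)%N.
  move=> lt_kn; have := mem_nth 0%N (_ : (k < size p)%N).
  by rewrite (perm_mem perm_p) mem_iota size_p; apply.
have inj_p : injectiveb [ffun i : 'I_n => insubd i (nth 0%N p i) : 'I_n].
  apply/injectiveP => i j; rewrite !ffunE => /(congr1 val).
  rewrite !val_insubd !lt_p // => /eqP; rewrite nth_uniq ?size_p //; last first.
    by rewrite (perm_uniq perm_p) iota_uniq.
  by move/eqP/val_inj.
apply: (@eq_from_nth _ 0%N); rewrite size_perm_list ?size_p // => i lt_in.
by rewrite (nth_perm_list _ (Ordinal lt_in)) -pvalE insubdK // ffunE val_insubd lt_p.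
Qed.

Lemma perm_lists_enum : perm_eq [seq perm_list s | s <- enum {perm 'I_n}] perm_lists.
Proof.
apply: uniq_perm; rewrite ?permutations_uniq ?(map_inj_uniq perm_list_inj) ?enum_uniq //.
move=> p; apply/mapP/idP => [[s _ ->] | p_in]; first exact: perm_list_in.
by exists (perm_of_list p); rewrite ?mem_enum ?perm_of_listK.
Qed.

Lemma big_perm_list (R : nmodType) (g : seq nat -> R) :
  \sum_(s : {perm 'I_n}) g (perm_list s) = \sum_(l <- perm_lists) g l.
Proof. by rewrite -(perm_big _ perm_lists_enum) big_map big_enum. Qed.

End PermLists.

Section GroupRingLists.

Variable n : nat.

Definition zs_of_list (d : seq (seq nat * int)) : ZS n :=
  [ffun t => \sum_(x <- d) (if t == (perm_of_list n x.1)^-1%g then x.2 else 0)].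

Lemma gmul_zs_of_list d (a : ZS n) s :
  gmul (zs_of_list d) a s = \sum_(x <- d) x.2 * a (perm_of_list n x.1 * s)%g.
Proof.
rewrite /gmul ffunE; under eq_bigr => t _ do rewrite ffunE mulr_suml.
rewrite exchange_big /=; apply: eq_bigr => x _.
rewrite (bigD1 (perm_of_list n x.1)^-1%g) //= eqxx invgK big1 ?addr0 // => t /negbTE ->.
by rewrite mul0r.
Qed.

Lemma gmul0 (a : ZS n) : gmul 0 a = 0.
Proof. by apply/ffunP => s; rewrite !ffunE big1 // => t _; rewrite ffunE mul0r. Qed.

End GroupRingLists.

Section EdgeKeys.

Variable E : seq (nat * nat).

Local Notation edge := 'I_(size E).

Definition edge_key (F : {set edge}) : seq nat := [seq val e | e <- enum F].

Lemma size_edge_key F : size (edge_key F) = #|F|.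
Proof. by rewrite size_map cardE. Qed.

Lemma edge_key1 e : edge_key [set e] = [:: val e].
Proof. by rewrite /edge_key enum_set1. Qed.

Lemma edge_key2 e f : e != f -> edge_key [set e; f] = [:: minn e f; maxn e f].
Proof.
have key_lt (x y : edge) : (x < y)%N -> edge_key [set x; y] = [:: val x; val y].
  move=> lt_xy; apply: (irr_sorted_eq ltn_trans ltnn); last 1 first.
  - move=> i; rewrite !inE; apply/mapP/orP => [[z] | [] /eqP->].
    + by rewrite mem_enum => /set2P [] -> ->; [left | right].
    + by exists x; rewrite ?mem_enum ?set21.
    + by exists y; rewrite ?mem_enum ?set22.
  - rewrite /edge_key /enum_mem -enumT sorted_map.
    apply: sorted_filter; first by move=> ? ? ?; apply: ltn_trans.
    by rewrite -sorted_map val_enum_ord iota_ltn_sorted.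
  - by rewrite /= lt_xy.
move=> neq_ef; case: (ltngtP e f) => [lt_ef | lt_fe | /val_inj eq_ef].
- exact: key_lt.
- by rewrite setUC key_lt.
- by rewrite eq_ef eqxx in neq_ef.
Qed.

Definition key_edges (k : seq nat) : seq (nat * nat) := [seq nth (0%N, 0%N) E i | i <- k].

End EdgeKeys.

(* Vertices are 0-based here, edges carry the 1-based labels of the edge list. *)
Definition joins (p : nat * nat) (u v : nat) : bool := (p == (u.+1, v.+1)) || (p == (v.+1, u.+1)).

Definition adj_list (ed : seq (nat * nat)) (u v : nat) : bool := has (fun p => joins p u v) ed.

Lemma joins_eq p x y z w :
  joins p x y -> joins p z w -> (x = z /\ y = w) \/ (x = w /\ y = z).
Proof.
by rewrite /joins => /orP [] /eqP -> /orP [] /eqP [] -> ->; [left | right | right | left].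
Qed.

Section SmallEdgeSets.

Variables (n : nat) (E : seq (nat * nat)).

Local Notation edge := 'I_(size E).

Lemma adjF_key (F : {set edge}) (u v : 'I_n) :
  adjF F u v = adj_list (key_edges E (edge_key F)) u v.
Proof.
rewrite /adjF /adj_list /key_edges -map_comp has_map.
apply/existsP/hasP => [[e /andP [e_in joins_e]] | [e e_in joins_e]].
  by exists e; rewrite ?mem_enum.
by exists e; rewrite -mem_enum e_in.
Qed.

Definition reach2 (ed : seq (nat * nat)) (u v : nat) : bool :=
  [|| u == v, adj_list ed u v | has (fun w => adj_list ed u w && adj_list ed w v) (iota 0 n)].

Lemma reach2_step ed x y z : (size ed <= 2)%N -> (y < n)%N ->
  reach2 ed x y -> adj_list ed y z -> reach2 ed x z.
Proof.
rewrite /reach2 => small_ed lt_yn /or3P [/eqP <- | xy | /hasP [w _ /andP [xw wy]]] yz.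
- by rewrite yz orbT.
- by apply/or3P/Or33/hasP; exists y; rewrite ?mem_iota ?xy.
case/hasP: (xw) => p p_ed jp; case/hasP: (wy) => q q_ed jq; case/hasP: (yz) => r r_ed jr.
case/or3P: (mem_size_le2 small_ed p_ed q_ed r_ed) => /eqP eq_pqr.
- have eq_xy : x = y by rewrite -eq_pqr in jq; case: (joins_eq jp jq) => [[-> ->] | [-> _]].
  by rewrite eq_xy yz orbT.
- have eq_wz : w = z by rewrite -eq_pqr in jr; case: (joins_eq jq jr) => [[-> ->] | [-> _]].
  by rewrite -eq_wz xw orbT.
- rewrite -eq_pqr in jr; case: (joins_eq jp jr) => [[_ <-] | [-> _]]; last by rewrite eqxx.
  by rewrite xw orbT.
Qed.

Lemma connect_adjF_small (F : {set edge}) (u v : 'I_n) : (#|F| <= 2)%N ->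
  connect (adjF F) u v = reach2 (key_edges E (edge_key F)) u v.
Proof.
rewrite -size_edge_key -(size_map (nth (0%N, 0%N) E)) => small_F.
apply/idP/idP => [/connectP [p p_path ->] | /or3P [/eqP /val_inj -> // | uv | /hasP [w]]].
- suff conn_path (x : 'I_n) : reach2 (key_edges E (edge_key F)) u x -> path (adjF F) x p ->
      reach2 (key_edges E (edge_key F)) u (last x p).
    by apply: conn_path; rewrite // /reach2 eqxx.
  elim: p x {p_path} => [|y p IHp] x //= ux /andP [xy y_path].
  by apply: IHp y_path; apply: reach2_step ux _; rewrite // -adjF_key.
- by apply: connect1; rewrite adjF_key.
- rewrite mem_iota => /= lt_wn /andP [uw wv].
  by apply: (connect_trans (y := Ordinal lt_wn)); apply: connect1; rewrite adjF_key.
Qed.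

Definition in_Sbeta_list (ed : seq (nat * nat)) (l : seq nat) : bool :=
  all (fun v => reach2 ed v (nth 0%N l v)) (iota 0 n).

Lemma Sbeta_small (F : {set edge}) s : (#|F| <= 2)%N ->
  (s \in Sbeta n F) = in_Sbeta_list (key_edges E (edge_key F)) (perm_list s).
Proof.
move=> small_F; rewrite inE; apply/forallP/allP => [conn_s v | conn_s v].
  rewrite mem_iota => /= lt_vn; have := conn_s (Ordinal lt_vn).
  by rewrite connect_adjF_small // -nth_perm_list.
by rewrite connect_adjF_small // -nth_perm_list conn_s // mem_iota /=.
Qed.

Lemma sum_Sbeta_small (V : nmodType) (F : {set edge}) (g : seq nat -> V) t : (#|F| <= 2)%N ->
  \sum_(h in Sbeta n F) g (perm_list (t * h)%g) =
  \sum_(l <- perm_lists n | in_Sbeta_list (key_edges E (edge_key F)) l)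
     g (list_mul n (perm_list t) l).
Proof.
move=> small_F; rewrite big_mkcond [RHS]big_mkcond -big_perm_list.
by apply: eq_bigr => h _; rewrite Sbeta_small // perm_list_mul.
Qed.

End SmallEdgeSets.

Definition lookup (T : Type) (tab : seq (seq nat * seq T)) (k : seq nat) : seq T :=
  nth [::] (map snd tab) (index k (map fst tab)).

Lemma lookup_notin T (tab : seq (seq nat * seq T)) k : k \notin map fst tab -> lookup tab k = [::].
Proof. by move=> k_notin; rewrite /lookup nth_default // size_map -(size_map fst) memNindex. Qed.

Lemma lookup_all T (P : pred (seq T)) tab k : P [::] -> all P (map snd tab) -> P (lookup tab k).
Proof.
move=> P0 /all_nthP P_tab; rewrite /lookup.
by case: (ltnP (index k (map fst tab)) (size (map snd tab))) => [/P_tab | /(nth_default _) ->].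
Qed.

Definition chain_table := seq (seq nat * seq (seq nat * int)).

Section ChainsFromTables.

Variables (n : nat) (E : seq (nat * nat)).

Local Notation edge := 'I_(size E).

Definition chain_of (tab : chain_table) : chain n E :=
  [ffun F => gmul (zs_of_list n (lookup tab (edge_key F))) (aF n F)].

Lemma chain_of_inC i tab : all (fun x => size x.1 == i) tab -> inC i (chain_of tab).
Proof.
move=> /allP sizes_tab; split=> F;
  last by exists (zs_of_list n (lookup tab (edge_key F))); rewrite ffunE.
move=> card_F; have zs0 : zs_of_list n [::] = 0 by apply/ffunP => t; rewrite !ffunE big_nil.
rewrite ffunE lookup_notin ?zs0 ?gmul0 //; apply/mapP => -[x /sizes_tab /eqP size_x key_F].
by rewrite -size_edge_key key_F size_x eqxx in card_F.
Qed.

Definition coef_list (ed : seq (nat * nat)) (d : seq (seq nat * int)) (l : seq nat) : int :=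
  \sum_(x <- d) x.2 *+ in_Sbeta_list n ed (list_mul n x.1 l).

Definition valid_table (tab : chain_table) : bool :=
  all (fun x => all (fun y => y.1 \in perm_lists n) x.2) tab.

Lemma chain_ofE tab (F : {set edge}) s : valid_table tab -> (#|F| <= 2)%N ->
  chain_of tab F s = coef_list (key_edges E (edge_key F)) (lookup tab (edge_key F)) (perm_list s).
Proof.
move=> valid_tab small_F; rewrite ffunE gmul_zs_of_list /coef_list.
have: all (fun y => y.1 \in perm_lists n) (lookup tab (edge_key F)).
  by apply: lookup_all; rewrite // all_map.
move=> /allP valid_d; apply: eq_big_seq => x /valid_d x_perm.
rewrite ffunE Sbeta_small // perm_list_mul perm_of_listK //.
by case: in_Sbeta_list; rewrite ?mulr1 ?mulr0.
Qed.

End ChainsFromTables.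

Section Differential.

Variables (n : nat) (E : seq (nat * nat)).

Local Notation edge := 'I_(size E).

Lemma dchain_eq0 i (c : chain n E) (G : {set edge}) :
  inC i.+1 c -> #|G| != i -> dchain c G = 0.
Proof.
move=> [c0 _] card_G; rewrite ffunE big1 // => e e_notin.
by rewrite c0 ?mul0rz // cardsU1 e_notin add1n eqSS.
Qed.

Lemma dchain_set0 (c : chain n E) : dchain c set0 = \sum_(e : edge) c [set e].
Proof.
rewrite ffunE; apply: eq_big => [e | e _]; first by rewrite in_set0.
rewrite setU0 (_ : [set f in set0 | _] = set0) ?cards0 ?expr0 ?mulr1z //.
by apply/setP => f; rewrite !inE.
Qed.

Lemma dchain_set1 (c : chain n E) (f : edge) :
  dchain c [set f] = \sum_(e : edge | e != f) c [set e; f] *~ (-1) ^+ (f < e)%N.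
Proof.
rewrite ffunE; apply: eq_big => [e | e _]; first by rewrite in_set1.
congr (_ *~ (-1) ^+ _); case: (boolP (f < e)%N) => lt_fe.
  rewrite (_ : [set _ in _ | _] = [set f]) ?cards1 //.
  by apply/setP => g; rewrite !inE andb_idr // => /eqP ->.
rewrite (_ : [set _ in _ | _] = set0) ?cards0 //; apply/setP => g; rewrite !inE.
by case: (g =P f) => [-> | _]; rewrite ?(negbTE lt_fe).
Qed.

End Differential.

Section Pairing.

Variables (n : nat) (E : seq (nat * nat)) (R : pzRingType).
Variable w : 'I_(size E) -> {perm 'I_n} -> R.

Definition pairing (x : chain n E) : R :=
  \sum_(e : 'I_(size E)) \sum_(s : {perm 'I_n}) (x [set e] s)%:~R * w e s.

Lemma sum_inM_eq0 (F : {set 'I_(size E)}) x (g : {perm 'I_n} -> R) :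
  (forall t, \sum_(h in Sbeta n F) g (t * h)%g = 0) -> inM F x ->
  \sum_(s : {perm 'I_n}) (x s)%:~R * g s = 0.
Proof.
move=> g_coset [y ->]; under eq_bigr => s _ do rewrite ffunE rmorph_sum mulr_suml.
rewrite exchange_big big1 // => t _ /=.
under eq_bigr => s _ do rewrite rmorphM -mulrA.
rewrite -mulr_sumr (reindex_inj (mulgI t)) /=.
under eq_bigr => h _ do rewrite mulKg ffunE.
rewrite (eq_bigr (fun h => if h \in Sbeta n F then g (t * h)%g else 0)); last first.
  by move=> h _; case: ifP; rewrite ?mul1r ?mul0r.
by rewrite -big_mkcond g_coset mulr0.
Qed.

Lemma pairing_dchain_eq0 b :
  (forall (e f : 'I_(size E)) t, (e < f)%N ->
     \sum_(h in Sbeta n [set e; f]) (w f (t * h)%g - w e (t * h)%g) = 0) ->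
  inC 2 b -> pairing (dchain b) = 0.
Proof.
move=> coset0 [_ b_in].
have -> : pairing (dchain b) = \sum_(f : 'I_(size E)) \sum_(e | e != f)
    \sum_(s : {perm 'I_n}) ((b [set e; f] s) *~ (-1) ^+ (f < e)%N)%:~R * w f s.
  apply: eq_bigr => f _; rewrite exchange_big; apply: eq_bigr => s _ /=.
  by rewrite dchain_set1 sum_ffunE rmorph_sum mulr_suml; apply: eq_bigr => e _; rewrite ffunMzE.
rewrite sum_offdiag big1 // => f _; rewrite big1 // => e lt_ef.
rewrite lt_ef ltnNge (ltnW lt_ef) (setUC [set f]) -big_split /=.
rewrite (eq_bigr (fun s => (b [set e; f] s)%:~R * (w f s - w e s))); last first.
  by move=> s _; rewrite expr0 expr1 mulr1z mulrN1z rmorphN mulNr -mulrBr.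
by apply: (sum_inM_eq0 (g := fun s => w f s - w e s) _ (b_in _)) => t; apply: coset0.
Qed.

End Pairing.

(* Edges are 0-based indices into [G6_edges].  In the table entry for the edge set F with
   sorted index list k, a pair (p, m) contributes m (perm_of_list p)^-1 a_F. *)
Definition cycle_table : chain_table := ([::
  ([:: 0],
    [:: ([:: 0; 1; 2; 3; 4; 5], 1%Z); ([:: 2; 0; 1; 3; 4; 5], 1%Z); ([:: 3; 2; 1; 0; 4; 5], 1%Z);
     ([:: 1; 3; 2; 0; 4; 5], 1%Z)]);
  ([:: 1],
    [:: ([:: 1; 0; 2; 3; 4; 5], -1%Z); ([:: 2; 3; 1; 0; 4; 5], -1%Z)]);
  ([:: 2],
    [:: ([:: 0; 2; 1; 3; 4; 5], -1%Z); ([:: 3; 1; 2; 0; 4; 5], -1%Z)])])%N.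

Definition boundary_table : chain_table := ([::
  ([:: 0; 1],
    [:: ([:: 2; 3; 4; 1; 5; 0], 1%Z); ([:: 1; 2; 4; 3; 5; 0], -1%Z); ([:: 1; 2; 3; 4; 5; 0], -1%Z);
     ([:: 2; 3; 4; 1; 0; 5], 1%Z); ([:: 2; 3; 4; 0; 1; 5], -1%Z); ([:: 1; 3; 4; 0; 2; 5], -1%Z);
     ([:: 1; 2; 4; 0; 3; 5], -1%Z); ([:: 1; 2; 3; 0; 4; 5], -2%Z); ([:: 0; 2; 4; 3; 1; 5], 1%Z);
     ([:: 0; 2; 3; 4; 1; 5], 1%Z); ([:: 0; 2; 4; 1; 3; 5], -1%Z); ([:: 0; 2; 3; 1; 4; 5], -1%Z);
     ([:: 0; 1; 4; 3; 2; 5], 1%Z); ([:: 0; 1; 3; 4; 2; 5], 1%Z); ([:: 0; 1; 4; 2; 3; 5], -1%Z);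
     ([:: 0; 1; 3; 2; 4; 5], -1%Z); ([:: 0; 1; 2; 3; 4; 5], -1%Z)]);
  ([:: 0; 2],
    [:: ([:: 1; 3; 2; 4; 5; 0], 1%Z); ([:: 1; 3; 0; 4; 2; 5], -1%Z); ([:: 1; 2; 0; 3; 4; 5], 1%Z);
     ([:: 0; 1; 3; 2; 4; 5], 2%Z); ([:: 2; 3; 1; 4; 0; 5], -1%Z); ([:: 0; 1; 4; 2; 3; 5], 1%Z);
     ([:: 2; 3; 0; 4; 1; 5], -1%Z)]);
  ([:: 0; 3],
    [:: ([:: 1; 3; 2; 0; 5; 4], -1%Z); ([:: 2; 3; 1; 0; 5; 4], -1%Z)]);
  ([:: 0; 5],
    [:: ([:: 0; 3; 2; 4; 1; 5], -1%Z); ([:: 0; 3; 1; 4; 2; 5], -1%Z); ([:: 1; 3; 0; 4; 2; 5], -1%Z);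
     ([:: 1; 2; 4; 3; 5; 0], 1%Z); ([:: 1; 3; 2; 4; 5; 0], 1%Z); ([:: 2; 3; 1; 4; 5; 0], 1%Z);
     ([:: 1; 2; 3; 4; 5; 0], 1%Z); ([:: 2; 3; 0; 4; 1; 5], -1%Z)]);
  ([:: 0; 6],
    [:: ([:: 2; 3; 0; 1; 4; 5], 1%Z); ([:: 1; 2; 0; 3; 4; 5], -1%Z); ([:: 0; 3; 1; 2; 4; 5], 1%Z);
     ([:: 0; 3; 2; 1; 4; 5], 1%Z); ([:: 1; 3; 0; 2; 4; 5], 1%Z); ([:: 1; 2; 3; 0; 4; 5], -1%Z)]);
  ([:: 0; 7],
    [:: ([:: 1; 2; 0; 3; 4; 5], 1%Z); ([:: 1; 4; 0; 3; 2; 5], 2%Z); ([:: 1; 3; 0; 4; 2; 5], 2%Z);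
     ([:: 2; 4; 0; 3; 1; 5], 2%Z); ([:: 2; 3; 0; 4; 1; 5], 2%Z); ([:: 1; 3; 2; 4; 5; 0], -1%Z);
     ([:: 1; 4; 2; 3; 5; 0], -1%Z); ([:: 3; 4; 1; 2; 5; 0], -1%Z); ([:: 2; 4; 1; 3; 5; 0], -1%Z);
     ([:: 2; 3; 1; 4; 5; 0], -1%Z); ([:: 3; 4; 0; 1; 2; 5], 1%Z); ([:: 3; 4; 0; 2; 1; 5], 1%Z)]);
  ([:: 0; 8],
    [:: ([:: 0; 2; 1; 3; 4; 5], -1%Z); ([:: 0; 1; 2; 3; 4; 5], -1%Z); ([:: 1; 3; 2; 0; 4; 5], -1%Z);
     ([:: 2; 3; 1; 0; 4; 5], -1%Z)]);
  ([:: 0; 9],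
    [:: ([:: 2; 3; 0; 1; 4; 5], -1%Z); ([:: 0; 2; 3; 1; 4; 5], -1%Z); ([:: 1; 3; 0; 2; 4; 5], -1%Z);
     ([:: 0; 1; 3; 2; 4; 5], -1%Z)]);
  ([:: 0; 10],
    [:: ([:: 3; 4; 2; 0; 1; 5], 1%Z); ([:: 3; 4; 1; 0; 2; 5], 1%Z); ([:: 1; 4; 2; 0; 3; 5], 1%Z);
     ([:: 2; 4; 1; 0; 3; 5], 1%Z); ([:: 2; 4; 1; 3; 0; 5], 1%Z); ([:: 2; 3; 4; 1; 0; 5], -1%Z);
     ([:: 3; 4; 2; 1; 0; 5], -2%Z); ([:: 2; 4; 3; 1; 0; 5], -1%Z); ([:: 2; 3; 1; 4; 0; 5], 1%Z);
     ([:: 1; 3; 2; 0; 4; 5], 1%Z); ([:: 2; 3; 1; 0; 4; 5], 1%Z)]);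
  ([:: 1; 2],
    [:: ([:: 0; 4; 1; 3; 2; 5], 1%Z); ([:: 0; 1; 3; 4; 2; 5], 1%Z); ([:: 0; 3; 1; 4; 2; 5], 1%Z);
     ([:: 0; 1; 2; 3; 4; 5], -1%Z); ([:: 0; 2; 1; 3; 4; 5], -1%Z); ([:: 1; 2; 3; 4; 5; 0], 1%Z);
     ([:: 1; 4; 2; 3; 0; 5], 1%Z); ([:: 1; 2; 3; 4; 0; 5], 1%Z); ([:: 1; 3; 2; 4; 0; 5], 1%Z);
     ([:: 0; 4; 2; 3; 1; 5], 1%Z); ([:: 0; 2; 3; 4; 1; 5], 1%Z); ([:: 0; 3; 2; 4; 1; 5], 1%Z)]);
  ([:: 1; 3],
    [:: ([:: 1; 4; 2; 0; 5; 3], 1%Z); ([:: 1; 3; 2; 0; 5; 4], 1%Z)]);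
  ([:: 1; 5],
    [:: ([:: 2; 0; 4; 3; 1; 5], 1%Z); ([:: 2; 0; 3; 4; 1; 5], 1%Z); ([:: 1; 0; 2; 3; 4; 5], 1%Z);
     ([:: 1; 0; 4; 3; 2; 5], 1%Z); ([:: 1; 0; 3; 4; 2; 5], 1%Z); ([:: 0; 3; 1; 4; 2; 5], 1%Z);
     ([:: 0; 1; 4; 3; 2; 5], 1%Z); ([:: 0; 1; 3; 4; 2; 5], 1%Z); ([:: 2; 1; 4; 3; 5; 0], -1%Z);
     ([:: 1; 3; 2; 4; 5; 0], -1%Z); ([:: 1; 2; 4; 3; 5; 0], -1%Z); ([:: 1; 2; 3; 4; 5; 0], -1%Z);
     ([:: 2; 1; 3; 4; 5; 0], -1%Z); ([:: 0; 3; 2; 4; 1; 5], 1%Z); ([:: 0; 2; 4; 3; 1; 5], 1%Z);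
     ([:: 0; 2; 3; 4; 1; 5], 1%Z)]);
  ([:: 1; 6],
    [:: ([:: 2; 1; 4; 0; 3; 5], -1%Z); ([:: 0; 3; 2; 1; 4; 5], -1%Z); ([:: 0; 2; 4; 1; 3; 5], -1%Z);
     ([:: 0; 2; 3; 1; 4; 5], -1%Z); ([:: 0; 1; 4; 3; 2; 5], 1%Z); ([:: 2; 1; 3; 0; 4; 5], -1%Z);
     ([:: 1; 2; 3; 0; 4; 5], -1%Z); ([:: 2; 0; 4; 1; 3; 5], -1%Z); ([:: 1; 0; 4; 2; 3; 5], -1%Z);
     ([:: 1; 0; 3; 2; 4; 5], -1%Z); ([:: 1; 2; 4; 0; 3; 5], -1%Z); ([:: 2; 0; 3; 1; 4; 5], -1%Z);
     ([:: 0; 3; 1; 2; 4; 5], -1%Z); ([:: 0; 1; 4; 2; 3; 5], -1%Z); ([:: 0; 1; 3; 2; 4; 5], -1%Z)]);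
  ([:: 1; 7],
    [:: ([:: 0; 1; 3; 4; 2; 5], -2%Z); ([:: 0; 2; 3; 4; 1; 5], -2%Z); ([:: 1; 4; 2; 3; 5; 0], 1%Z);
     ([:: 1; 3; 2; 4; 5; 0], 1%Z); ([:: 0; 4; 1; 3; 2; 5], -1%Z); ([:: 0; 3; 1; 4; 2; 5], -1%Z);
     ([:: 0; 4; 2; 3; 1; 5], -1%Z); ([:: 0; 3; 2; 4; 1; 5], -1%Z)]);
  ([:: 1; 9],
    [:: ([:: 0; 2; 3; 1; 4; 5], 1%Z); ([:: 0; 1; 3; 2; 4; 5], 1%Z)]);
  ([:: 1; 10],
    [:: ([:: 2; 4; 3; 0; 1; 5], -1%Z); ([:: 2; 3; 4; 0; 1; 5], -1%Z); ([:: 1; 3; 4; 0; 2; 5], -1%Z);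
     ([:: 1; 4; 3; 0; 2; 5], -1%Z); ([:: 1; 4; 2; 0; 3; 5], -1%Z); ([:: 1; 4; 2; 3; 0; 5], -1%Z);
     ([:: 1; 2; 4; 3; 0; 5], -1%Z); ([:: 2; 3; 4; 1; 0; 5], 1%Z); ([:: 2; 4; 3; 1; 0; 5], 1%Z);
     ([:: 1; 3; 2; 4; 0; 5], -1%Z); ([:: 1; 2; 3; 4; 0; 5], -1%Z); ([:: 1; 3; 2; 0; 4; 5], -1%Z)]);
  ([:: 2; 3],
    [:: ([:: 0; 2; 1; 3; 5; 4], 1%Z); ([:: 0; 1; 2; 3; 5; 4], 1%Z)]);
  ([:: 2; 4],
    [:: ([:: 1; 0; 3; 2; 4; 5], 1%Z)]);
  ([:: 2; 6],
    [:: ([:: 0; 2; 1; 3; 4; 5], 1%Z); ([:: 0; 2; 3; 1; 4; 5], 1%Z); ([:: 0; 2; 1; 4; 3; 5], 1%Z);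
     ([:: 0; 2; 4; 1; 3; 5], 1%Z); ([:: 1; 0; 4; 2; 3; 5], 1%Z); ([:: 1; 0; 3; 2; 4; 5], 1%Z);
     ([:: 0; 1; 4; 2; 3; 5], 1%Z); ([:: 0; 1; 3; 2; 4; 5], 1%Z); ([:: 0; 1; 2; 3; 4; 5], 1%Z);
     ([:: 0; 1; 2; 4; 3; 5], 1%Z); ([:: 0; 1; 3; 4; 2; 5], 1%Z)]);
  ([:: 2; 8],
    [:: ([:: 0; 2; 1; 3; 4; 5], 1%Z); ([:: 0; 1; 2; 3; 4; 5], 1%Z)]);
  ([:: 2; 10],
    [:: ([:: 0; 2; 1; 4; 3; 5], -1%Z); ([:: 0; 1; 2; 4; 3; 5], -1%Z); ([:: 1; 4; 2; 3; 0; 5], 1%Z);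
     ([:: 1; 2; 4; 3; 0; 5], 1%Z); ([:: 1; 3; 2; 4; 0; 5], 1%Z); ([:: 1; 2; 3; 4; 0; 5], 1%Z);
     ([:: 0; 2; 1; 3; 4; 5], -1%Z); ([:: 0; 1; 2; 3; 4; 5], -1%Z)]);
  ([:: 3; 4],
    [:: ([:: 1; 0; 3; 4; 5; 2], -1%Z)]);
  ([:: 3; 5],
    [:: ([:: 1; 0; 3; 4; 5; 2], 1%Z); ([:: 0; 1; 4; 2; 5; 3], -1%Z); ([:: 0; 1; 3; 2; 5; 4], -1%Z)]);
  ([:: 3; 7],
    [:: ([:: 1; 3; 0; 4; 5; 2], 1%Z); ([:: 0; 2; 1; 4; 5; 3], 1%Z); ([:: 0; 2; 1; 3; 5; 4], 1%Z);
     ([:: 0; 1; 2; 4; 5; 3], 1%Z); ([:: 0; 1; 2; 3; 5; 4], 1%Z)]);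
  ([:: 4; 9],
    [:: ([:: 2; 0; 3; 1; 4; 5], 1%Z); ([:: 1; 0; 3; 2; 4; 5], 1%Z)]);
  ([:: 4; 10],
    [:: ([:: 2; 0; 3; 4; 1; 5], -1%Z); ([:: 1; 0; 3; 4; 2; 5], -1%Z)]);
  ([:: 5; 6],
    [:: ([:: 0; 1; 4; 2; 3; 5], 1%Z); ([:: 0; 1; 3; 2; 4; 5], 1%Z)]);
  ([:: 5; 8],
    [:: ([:: 2; 0; 1; 3; 4; 5], 1%Z); ([:: 1; 0; 2; 3; 4; 5], 1%Z)]);
  ([:: 5; 10],
    [:: ([:: 2; 0; 3; 4; 1; 5], 1%Z); ([:: 1; 0; 3; 4; 2; 5], 1%Z); ([:: 0; 1; 4; 2; 3; 5], -1%Z);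
     ([:: 0; 1; 3; 2; 4; 5], -1%Z)]);
  ([:: 6; 7],
    [:: ([:: 2; 1; 0; 3; 4; 5], -1%Z); ([:: 0; 1; 3; 4; 2; 5], 2%Z); ([:: 1; 2; 0; 3; 4; 5], -1%Z);
     ([:: 0; 2; 1; 4; 3; 5], 1%Z); ([:: 0; 1; 2; 4; 3; 5], 1%Z); ([:: 0; 2; 1; 3; 4; 5], 1%Z);
     ([:: 0; 1; 2; 3; 4; 5], 1%Z)]);
  ([:: 7; 10],
    [:: ([:: 2; 3; 0; 4; 1; 5], 1%Z); ([:: 1; 3; 0; 4; 2; 5], 1%Z); ([:: 0; 2; 1; 4; 3; 5], 1%Z);
     ([:: 0; 1; 2; 4; 3; 5], 1%Z); ([:: 0; 2; 1; 3; 4; 5], 1%Z); ([:: 0; 1; 2; 3; 4; 5], 1%Z)])])%N.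

Definition mark_table : seq (nat * nat * nat) :=
  [:: (0, 0, 2); (3, 3, 5); (5, 3, 4); (5, 3, 5); (7, 1, 3);
      (7, 3, 4); (7, 3, 5); (8, 1, 4); (9, 4, 5)]%N.

Definition marked (e : nat) (l : seq nat) : bool :=
  (e, minn (nth 0 l 0) (nth 0 l 1), maxn (nth 0 l 0) (nth 0 l 1))%N \in mark_table.

Local Notation edge6 := 'I_(size G6_edges).

Lemma edge6_in_iota (e : edge6) : val e \in iota 0 11.
Proof. by rewrite mem_iota /=; exact: ltn_ord. Qed.

Definition weight6 (e : edge6) (s : {perm 'I_6}) : 'Z_2 := (marked e (perm_list s))%:R.

Definition cycle_coef (i : nat) (l : seq nat) : int :=
  coef_list 6 (key_edges G6_edges [:: i]) (lookup cycle_table [:: i]) l.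

Definition boundary_coef (i j : nat) (l : seq nat) : int :=
  let k := [:: minn i j; maxn i j] in coef_list 6 (key_edges G6_edges k) (lookup boundary_table k) l.

Lemma cycle_table_size : all (fun x => size x.1 == 1%N) cycle_table.
Proof. by []. Qed.

Lemma boundary_table_size : all (fun x => size x.1 == 2%N) boundary_table.
Proof. by []. Qed.

Lemma cycle_table_valid : valid_table 6 cycle_table.
Proof. by vm_compute. Qed.

Lemma boundary_table_valid : valid_table 6 boundary_table.
Proof. by vm_compute. Qed.

Lemma cycle_coef_sum : all (fun l => \sum_(0 <= i < 11) cycle_coef i l == 0) (perm_lists 6).
Proof. by rewrite /cycle_coef /coef_list unlock; vm_compute. Qed.

Lemma marked_cycle_coef_sum :
  \sum_(0 <= i < 11) \sum_(l <- perm_lists 6) (cycle_coef i l)%:~R * (marked i l)%:R == 1 :> 'Z_2.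
Proof. by rewrite /cycle_coef /coef_list unlock; vm_compute. Qed.

Lemma boundary_coef_sum :
  all (fun f => all (fun l =>
    \sum_(0 <= i < 11 | i != f) boundary_coef i f l *~ (-1) ^+ (f < i)%N == cycle_coef f l *+ 2)
    (perm_lists 6)) (iota 0 11).
Proof. by rewrite /boundary_coef /cycle_coef /coef_list unlock; vm_cast_no_check (erefl true). Qed.

Lemma marked_coset_parity :
  all (fun e => all (fun f => (e < f)%N ==>
    let S := [seq l <- perm_lists 6 | in_Sbeta_list 6 (key_edges G6_edges [:: e; f]) l] in
    all (fun t => odd (count (fun l => marked f (list_mul 6 t l)) S)
                  == odd (count (fun l => marked e (list_mul 6 t l)) S)) (perm_lists 6))
    (iota 0 11)) (iota 0 11).
Proof. vm_cast_no_check (erefl true). Qed.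

Definition cycle_chain : chain 6 G6_edges := chain_of 6 G6_edges cycle_table.

Definition boundary_chain : chain 6 G6_edges := chain_of 6 G6_edges boundary_table.

Lemma cycle_chainE (e : edge6) s : cycle_chain [set e] s = cycle_coef e (perm_list s).
Proof. by rewrite chain_ofE ?cycle_table_valid ?cards1 // edge_key1. Qed.

Lemma boundary_chainE (e f : edge6) s :
  e != f -> boundary_chain [set e; f] s = boundary_coef e f (perm_list s).
Proof.
by move=> neq_ef; rewrite chain_ofE ?edge_key2 ?boundary_table_valid // cards2 ltnS leq_b1.
Qed.

Lemma cycle_chain_is_cycle : is_cycle 1 cycle_chain.
Proof.
have cycle_in := chain_of_inC 6 G6_edges cycle_table_size.
split=> //; apply/ffunP => G; rewrite [RHS]ffunE.
have [-> | /set0Pn [e e_in]] := eqVneq G set0; last first.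
  by rewrite (dchain_eq0 cycle_in) // cards_eq0; apply/set0Pn; exists e.
apply/ffunP => s; rewrite dchain_set0 sum_ffunE ffunE.
under eq_bigr => e _ do rewrite cycle_chainE.
rewrite -(big_mkord xpredT (fun i => cycle_coef i (perm_list s))).
exact/eqP/(allP cycle_coef_sum)/perm_list_in.
Qed.

Lemma dchain_boundary_chain : dchain boundary_chain = cycle_chain *+ 2.
Proof.
apply/ffunP => G; rewrite ffunMnE.
have [/eqP /cards1P [f ->] | card_G] := eqVneq #|G| 1%N; last first.
  have [cycle0 _] := chain_of_inC 6 G6_edges cycle_table_size.
  by rewrite (dchain_eq0 (chain_of_inC _ _ boundary_table_size)) // cycle0 // mul0rn.
apply/ffunP => s; rewrite dchain_set1 sum_ffunE ffunMnE cycle_chainE.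
under eq_bigr => e neq_ef do rewrite ffunMzE boundary_chainE //.
rewrite -(big_mkord (fun i => i != f)
  (fun i => boundary_coef i f (perm_list s) *~ (-1) ^+ (f < i)%N)).
move: boundary_coef_sum => /allP /(_ _ (edge6_in_iota f)) /allP.
by move=> /(_ _ (perm_list_in s)) /eqP.
Qed.

Lemma weight6_coset_sum (e f : edge6) t : (e < f)%N ->
  \sum_(h in Sbeta 6 [set e; f]) (weight6 f (t * h)%g - weight6 e (t * h)%g) = 0.
Proof.
move=> lt_ef; have neq_ef : e != f by apply/eqP => eq_ef; rewrite eq_ef ltnn in lt_ef.
have key_ef : edge_key [set e; f] = [:: val e; val f].
  by rewrite edge_key2 // (minn_idPl (ltnW lt_ef)) (maxn_idPr (ltnW lt_ef)).
rewrite /weight6 (sum_Sbeta_small (fun l => (marked f l)%:R - (marked e l)%:R)); last first.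
  by rewrite cards2 ltnS leq_b1.
rewrite key_ef -big_filter sumrB !sum_count_Z2.
move: marked_coset_parity => /allP /(_ _ (edge6_in_iota e)) /allP /(_ _ (edge6_in_iota f)).
by move=> /implyP /(_ lt_ef) /allP /(_ _ (perm_list_in t)) /eqP ->; rewrite subrr.
Qed.

Lemma pairing_cycle_chain : pairing weight6 cycle_chain = 1.
Proof.
rewrite /pairing; under eq_bigr => e _ do under eq_bigr => s _ do rewrite cycle_chainE /weight6.
under eq_bigr => e _ do rewrite (big_perm_list 6 (fun l => (cycle_coef e l)%:~R * (marked e l)%:R)).
rewrite -(big_mkord xpredT
  (fun i => \sum_(l <- perm_lists 6) (cycle_coef i l)%:~R * (marked i l)%:R)).
exact/eqP/marked_cycle_coef_sum.
Qed.

Theorem mainTheorem16 : H_has_order2 6 G6_edges 1.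
Proof.
exists cycle_chain; split; first exact: cycle_chain_is_cycle.
split; last first.
  by exists boundary_chain; rewrite dchain_boundary_chain; split=> //; exact: chain_of_inC.
move=> [b [b_in cycle_eq]]; have := pairing_dchain_eq0 (w := weight6) weight6_coset_sum b_in.
by rewrite -cycle_eq pairing_cycle_chain => /eqP; rewrite oner_eq0.
Qed.
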